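(* There is a finite set $D$ and an infinite set $\Omega \subseteq \mathbf{W}_D$ of weightings such that $\mathrm{wPol}(\mathrm{Imp}(\Omega)) \neq \mathrm{wClone}(\Omega)$.
   Context: Let $\overline{\mathbb{Q}}=\mathbb{Q}\cup\{\infty\}$. An $m$-ary weighted relation on a finite set $D$ ($m\ge1$) is a map $\gamma:D^m\to\overline{\mathbb{Q}}$; $\mathbf{\Phi}_D$ denotes the set of all of them, and $\mathrm{Feas}(\gamma)=\{\mathbf{x}:\gamma(\mathbf{x})<\infty\}$. A $k$-ary operation is a map $f:D^k\to D$, applied to tuples coordinatewise; $f$ is a polymorphism of $\gamma$ if $f(\mathbf{x}_1,\dots,\mathbf{x}_k)\in\mathrm{Feas}(\gamma)$ whenever all $\mathbf{x}_i\in\mathrm{Feas}(\gamma)$; $\mathrm{Pol}(\Gamma)$ is the set of common polymorphisms of all $\gamma\in\Gamma$. Projections are $e^{(k)}_i(x_1,\dots,x_k)=x_i$. The superposition $f[g_1,\dots,g_k]$ of a $k$-ary $f$ with $\ell$-ary $g_i$ is $\mathbf{x}\mapsto f(g_1(\mathbf{x}),\dots,g_k(\mathbf{x}))$. A clone is a set of operations containing all projections and closed under superposition; $C^{(k)}$ denotes its $k$-ary members. A $k$-ary weighting of a clone $C$ is a function $\omega:C^{(k)}\to\mathbb{Q}$ with $\sum_{f\in C^{(k)}}\omega(f)=0$ and $\omega(f)<0$ only if $f$ is a projection. For $g_1,\dots,g_k\in C^{(\ell)}$, the superposition $\omega[g_1,\dots,g_k]:C^{(\ell)}\to\mathbb{Q}$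 is $\omega[g_1,\dots,g_k](f')=\sum_{f\in C^{(k)}:f[g_1,\dots,g_k]=f'}\omega(f)$; it is proper if it is again a weighting. A weighted clone is a non-empty set of weightings of a fixed clone $C$ closed under scaling by non-negative rationals, addition of weightings of equal arity, and proper superposition with operations of $C$. $\mathbf{W}_D$ is the set of all weightings of all clones on $D$. For $\Omega\subseteq\mathbf{W}_D$, extend each weighting by zeros to a weighting of the smallest clone containing all clones underlying members of $\Omega$; $\mathrm{wClone}(\Omega)$ is the smallest weighted clone containing these extended weightings. A $k$-ary weighting $\omega$ of a clone $C$ is a weighted polymorphism of $\gamma$ ($\gamma$ is improved by $\omega$) if $C\subseteq\mathrm{Pol}(\gamma)$ and for all $\mathbf{x}_1,\dots,\mathbf{x}_k\in\mathrm{Feas}(\gamma)$, $\sum_{f\in C^{(k)}}\omega(f)\gamma(f(\mathbf{x}_1,\dots,\mathbf{x}_k))\le0$. $\mathrm{Imp}(\Omega)$ is the set of weighted relations in $\mathbf{\Phi}_D$ improved by every $\omega\in\Omega$; for $\Gamma\subseteq\mathbf{\Phi}_D$, $\mathrm{wPol}(\Gamma)$ is the set of all weightings of the clone $\mathrm{Pol}(\Gamma)$ that are weighted polymorphisms of every $\gamma\in\Gamma$. *)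

From HB Require Import structures.
From mathcomp Require Import all_boot all_algebra.
From mathcomp Require Import boolp classical_sets cardinality.
Set Implicit Arguments. Unset Strict Implicit. Unset Printing Implicit Defensive.
Import GRing.Theory Num.Theory.
Local Open Scope ring_scope.

Section WeightedClones.
Variable D : finType.

Definition tup (m : nat) := {ffun 'I_m -> D}.
Definition op (k : nat) := {ffun tup k -> D}.

Definition proj (k : nat) (i : 'I_k) : op k := [ffun x : tup k => x i].
Definition is_proj k (f : op k) : Prop := exists i : 'I_k, f = proj i.

Definition superpos k l (f : op k) (g : 'I_k -> op l) : op l :=
  [ffun x : tup l => f [ffun i => g i x]].

(* a set of operations, graded by arity; arity 0 is never used (operations
   have arity k >= 1), enforced by C 0 being empty in is_clone *)
Definition cloneT := forall k : nat, {set op k}.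

Definition is_clone (C : cloneT) : Prop :=
  (forall f : op 0, f \notin C 0%N) /\
  (forall k (i : 'I_k), proj i \in C k) /\
  (forall k l (f : op k) (g : 'I_k -> op l),
      f \in C k -> (forall i, g i \in C l) -> superpos f g \in C l).

(* A weighting: an underlying clone, an arity and a rational function on
   k-ary operations (zero outside C^(k), which is how omega : C^(k) -> Q
   is represented canonically). *)
Record weighting := Weighting {
  wcl : cloneT; war : nat; wfun : {ffun op war -> rat} }.

Definition is_weighting (C : cloneT) k (w : {ffun op k -> rat}) : Prop :=
  (0 < k)%N /\
  (forall f, f \notin C k -> w f = 0) /\
  \sum_(f in C k) w f = 0 /\
  (forall f, f \in C k -> w f < 0 -> is_proj f).

Definition W_D : set weighting :=
  [set w | is_clone (wcl w) /\ is_weighting (wcl w) (wfun w)].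

(* weighted relations: gamma : D^m -> Q u {oo}, with None = oo *)
Record wrel := WRel { wr_ar : nat; wr_fun : {ffun tup wr_ar -> option rat} }.

Definition Phi_D : set wrel := [set g | (0 < wr_ar g)%N].

Definition feas (g : wrel) (x : tup (wr_ar g)) : bool := wr_fun g x != None.

Definition app k m (f : op k) (x : 'I_k -> tup m) : tup m :=
  [ffun j => f [ffun i => x i j]].

Definition is_pol k (f : op k) (g : wrel) : Prop :=
  forall x : 'I_k -> tup (wr_ar g), (forall i, feas (x i)) -> feas (app f x).

Definition Pol (G : set wrel) : cloneT :=
  fun k => finset (fun f : op k => `[< (0 < k)%N /\ forall g, G g -> is_pol f g >]).

(* omega is a weighted polymorphism of gamma; since the clone is contained in
   Pol(gamma), every gamma(f(x_1..x_k)) below is finite (so odflt 0 is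
   never used on an infinite value). *)
Definition wpol (w : weighting) (g : wrel) : Prop :=
  (forall k, wcl w k \subset Pol [set g] k) /\
  forall x : 'I_(war w) -> tup (wr_ar g), (forall i, feas (x i)) ->
    \sum_(f in wcl w (war w)) wfun w f * odflt 0 (wr_fun g (app f x)) <= 0.

Definition Imp (Om : set weighting) : set wrel :=
  [set g | Phi_D g /\ forall w, Om w -> wpol w g].

Definition wPol (G : set wrel) : set weighting :=
  [set w | (forall k, wcl w k = Pol G k) /\ is_weighting (wcl w) (wfun w) /\
           forall g, G g -> wpol w g].

Definition wsup (C : cloneT) k l (w : {ffun op k -> rat}) (g : 'I_k -> op l)
  : {ffun op l -> rat} :=
  [ffun f' => \sum_(f in C k | superpos f g == f') w f].

Definition is_wclone (C : cloneT) (P : forall k, {ffun op k -> rat} -> Prop)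
  : Prop :=
  (exists k (w : {ffun op k -> rat}), P k w) /\
  (forall k w, P k w -> is_weighting C w) /\
  (forall k w (c : rat), 0 <= c -> P k w -> P k [ffun f => c * w f]) /\
  (forall k w1 w2, P k w1 -> P k w2 -> P k [ffun f => w1 f + w2 f]) /\
  (forall k l w (g : 'I_k -> op l), P k w -> (forall i, g i \in C l) ->
      is_weighting C (wsup C w g) -> P l (wsup C w g)).

Definition gen_clone (Om : set weighting) : cloneT :=
  fun k => finset (fun f : op k => `[< forall C, is_clone C ->
      (forall w, Om w -> forall j, wcl w j \subset C j) -> f \in C k >]).

(* wClone(Om): smallest weighted clone (over gen_clone Om) containing the
   members of Om extended by zeros (the representation wfun is already zero
   outside the underlying clone, so the extension is wfun itself). *)
Definition wClone (Om : set weighting) : set weighting :=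
  [set w | (forall k, wcl w k = gen_clone Om k) /\
     forall P, is_wclone (gen_clone Om) P ->
       (forall w', Om w' -> P (war w') (wfun w')) -> P (war w) (wfun w)].

End WeightedClones.

From mathcomp Require Import all_boot all_order all_algebra.
From mathcomp Require Import boolp classical_sets cardinality.
From mathcomp Require Import lra.
Import Order.TTheory GRing.Theory Num.Theory.
Set Implicit Arguments. Unset Strict Implicit. Unset Printing Implicit Defensive.
Local Open Scope classical_set_scope.
Local Open Scope ring_scope.

(** Take D = {0,1,2}, the clone of all operations, the map h sending 0 to 0
and everything else to 1, and the unary weightings w = e_h - e_id and
omega_n = n w + (e_0 - e_id), where 0 is the constant map.  If every omega_n
improves gamma, then n (gamma(h x) - gamma x) + (gamma 0 - gamma x) <= 0 for all
n, so w improves gamma as well: w lies in wPol(Imp Omega).  Conversely, the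
weightings u such that, for all unary inputs, the weight of the operations
sending them to 0 is positive, or is zero while the weight of those sending them
to 1 is non-positive, form a weighted clone containing every omega_n.  The
weighting w is not of this kind: on the input 2 it puts no weight on 0 and
weight 1 on 1. *)

Lemma ray_le0 (R : archiRealFieldType) (a b : R) :
  (forall n : nat, n%:R * a + b <= 0) -> a <= 0.
Proof.
move=> ray; rewrite leNgt; apply/negP => a_gt0.
have /archi_boundP : 0 <= `|b| / a by rewrite divr_ge0 // ltW.
set N := Num.Def.archi_bound _; rewrite ltr_pdivrMr // => bN.
have := ray N; have := ler_norm (- b); rewrite normrN; lra.
Qed.

Lemma infinite_range T (f : nat -> T) : injective f -> infinite_set (range f).
Proof.
move=> f_inj fin; apply: infinite_nat; apply: (card_le_finite _ fin).
by have /card_eqPle[] := @inj_card_eq _ _ [set: nat] f (in2W f_inj).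
Qed.

Section WeightingCalculus.
Variable D : finType.

Definition full_clone : cloneT D := fun k => [set f : op D k | (0 < k)%N]%SET.

Lemma full_clone_is_clone : is_clone full_clone.
Proof.
split; first by move=> f; rewrite inE.
split; first by move=> k i; rewrite inE; apply: leq_ltn_trans (ltn_ord i).
move=> k l f g; rewrite inE => k_gt0 g_in; rewrite inE.
by have := g_in (Ordinal k_gt0); rewrite inE.
Qed.

Definition ray k (w v : {ffun op D k -> rat}) (n : nat) : {ffun op D k -> rat} :=
  [ffun f => n%:R * w f + v f].

Lemma is_weightingZ (C : cloneT D) k (w : {ffun op D k -> rat}) c :
  0 <= c -> is_weighting C w -> is_weighting C [ffun f => c * w f].
Proof.
move=> c_ge0 [k_gt0 [w_out [w_sum w_neg]]]; split=> //; split.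
  by move=> f /w_out; rewrite ffunE => ->; rewrite mulr0.
split.
  under eq_bigr do rewrite ffunE.
  by rewrite -mulr_sumr w_sum mulr0.
move=> f f_in; rewrite ffunE => cw_lt0; apply: w_neg => //.
by rewrite ltNge; apply: contraTN cw_lt0 => w_ge0; rewrite -leNgt mulr_ge0.
Qed.

Lemma is_weightingD (C : cloneT D) k (w v : {ffun op D k -> rat}) :
  is_weighting C w -> is_weighting C v -> is_weighting C [ffun f => w f + v f].
Proof.
move=> [k_gt0 [w_out [w_sum w_neg]]] [_ [v_out [v_sum v_neg]]].
split=> //; split.
  by move=> f f_out; rewrite ffunE w_out // v_out // addr0.
split.
  under eq_bigr do rewrite ffunE.
  by rewrite big_split /= w_sum v_sum addr0.
move=> f f_in; rewrite ffunE => wv_lt0.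
by have [/w_neg|w_ge0] := ltP (w f) 0; [apply | apply: v_neg => //; lra].
Qed.

Lemma ray_weighting (C : cloneT D) k (w v : {ffun op D k -> rat}) n :
  is_weighting C w -> is_weighting C v -> is_weighting C (ray w v n).
Proof.
move=> w_wt v_wt; have := is_weightingD (is_weightingZ (ler0n _ n) w_wt) v_wt.
by congr is_weighting; apply/ffunP => f; rewrite !ffunE.
Qed.

Lemma wpol_ray (C : cloneT D) k (w v : {ffun op D k -> rat}) (g : wrel D) :
  (forall n, wpol (Weighting C (ray w v n)) g) -> wpol (Weighting C w) g.
Proof.
move=> ray_pol; have [C_pol _] := ray_pol 0%N; split=> // x x_feas /=.
apply: (@ray_le0 _ _ (\sum_(f in C k) v f * odflt 0 (wr_fun g (app f x)))) => n.
have [_ /(_ x x_feas) /=] := ray_pol n.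
under eq_bigr do rewrite ffunE mulrDl -mulrA.
by rewrite big_split -mulr_sumr.
Qed.

Lemma big_dirac (T : finType) (A : {pred T}) (a : T) (X : T -> rat) :
  a \in A -> \sum_(f in A) (f == a)%:R * X f = X a.
Proof.
move=> a_in; rewrite (bigD1 a) //= eqxx mul1r big1 ?addr0 // => f /andP[_ /negPf->].
exact: mul0r.
Qed.

Definition dirac_diff k (a b : op D k) : {ffun op D k -> rat} :=
  [ffun f => (f == a)%:R - (f == b)%:R].

Lemma dirac_diff_weighting (C : cloneT D) k (a : op D k) (i : 'I_k) :
  is_clone C -> a \in C k -> is_weighting C (dirac_diff a (proj D i)).
Proof.
move=> [_ [C_proj _]] a_in; split; first exact: leq_ltn_trans (ltn_ord i).
split.
  move=> f f_out; rewrite ffunE.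
  have /negPf-> : f != a by apply: contraNneq f_out => ->.
  have /negPf-> : f != proj D i by apply: contraNneq f_out => ->; apply: C_proj.
  by rewrite subrr.
split.
  under eq_bigr do rewrite ffunE -[_ - _]mulr1 mulrBl.
  by rewrite sumrB !big_dirac ?C_proj ?subrr.
move=> f _; rewrite ffunE; have [-> _|f_ne] := eqVneq f (proj D i); first by exists i.
by rewrite subr0 ltNge ler0n.
Qed.

Lemma app_superpos k l m (f : op D k) (g : 'I_k -> op D l) (y : 'I_l -> tup D m) :
  app (superpos f g) y = app f (fun i => app (g i) y).
Proof.
apply/ffunP => j; rewrite !ffunE; congr (f _); apply/ffunP => i.
by rewrite !ffunE.
Qed.

Definition wmass k m (u : {ffun op D k -> rat}) (x : 'I_k -> tup D m) (s : tup D m) :=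
  \sum_f u f * (app f x == s)%:R.

Lemma wmassZ k m c (u : {ffun op D k -> rat}) x (s : tup D m) :
  wmass [ffun f => c * u f] x s = c * wmass u x s.
Proof. by rewrite /wmass mulr_sumr; apply: eq_bigr => f _; rewrite ffunE mulrA. Qed.

Lemma wmassD k m (u v : {ffun op D k -> rat}) x (s : tup D m) :
  wmass [ffun f => u f + v f] x s = wmass u x s + wmass v x s.
Proof. by rewrite /wmass -big_split; apply: eq_bigr => f _; rewrite ffunE mulrDl. Qed.

Lemma wmass_ray k m (w v : {ffun op D k -> rat}) n x (s : tup D m) :
  wmass (ray w v n) x s = n%:R * wmass w x s + wmass v x s.
Proof.
rewrite -wmassZ -wmassD; congr wmass.
by apply/ffunP => f; rewrite !ffunE.
Qed.

Lemma wmass_dirac_diff k m (a b : op D k) x (s : tup D m) :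
  wmass (dirac_diff a b) x s = (app a x == s)%:R - (app b x == s)%:R.
Proof.
rewrite /wmass; under eq_bigr do rewrite ffunE mulrBl.
by rewrite sumrB !big_dirac.
Qed.

Lemma wmass_wsup k l m (u : {ffun op D k -> rat}) (g : 'I_k -> op D l) y (s : tup D m) :
  (0 < k)%N -> wmass (wsup full_clone u g) y s = wmass u (fun i => app (g i) y) s.
Proof.
move=> k_gt0; rewrite /wmass.
have full f' : \sum_(f in full_clone k | superpos f g == f') u f =
               \sum_(f | superpos f g == f') u f.
  by apply: eq_bigl => f; rewrite inE k_gt0.
under eq_bigr do rewrite ffunE full mulr_suml big_mkcond.
rewrite exchange_big /=; apply: eq_bigr => f _.
by rewrite -big_mkcond /= (big_pred1 (superpos f g)) ?app_superpos.
Qed.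

Definition lex_cone (a b : rat) : Prop := 0 < a \/ (a = 0 /\ b <= 0).

Lemma lex_coneZ c a b : 0 <= c -> lex_cone a b -> lex_cone (c * a) (c * b).
Proof.
rewrite le0r => /orP[/eqP->|c_gt0]; first by rewrite !mul0r => _; right.
case=> [a_gt0|[-> b_le0]]; first by left; rewrite mulr_gt0.
by right; rewrite mulr0 pmulr_rle0.
Qed.

Lemma lex_coneD a b a' b' :
  lex_cone a b -> lex_cone a' b' -> lex_cone (a + a') (b + b').
Proof. rewrite /lex_cone; lra. Qed.

Definition cone_weighting m (s t : tup D m) k (u : {ffun op D k -> rat}) : Prop :=
  is_weighting full_clone u /\ forall x, lex_cone (wmass u x s) (wmass u x t).

Lemma cone_weighting_wclone m (s t : tup D m) :
  is_wclone full_clone (cone_weighting s t).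
Proof.
split.
  exists 1%N, [ffun _ => 0]; split.
    split=> //; split; first by move=> f; rewrite ffunE.
    split; first by rewrite big1 // => f _; rewrite ffunE.
    by move=> f _; rewrite ffunE ltxx.
  by move=> x; right; rewrite /wmass !big1 // => f _; rewrite ffunE mul0r.
split; first by move=> k w [].
split.
  move=> k w c c_ge0 [w_wt w_cone]; split; first exact: is_weightingZ.
  by move=> x; rewrite !wmassZ; apply: lex_coneZ.
split.
  move=> k w v [w_wt w_cone] [v_wt v_cone]; split; first exact: is_weightingD.
  by move=> x; rewrite !wmassD; apply: lex_coneD.
move=> k l w g [[k_gt0 _] w_cone] _ wsup_wt; split; first exact: wsup_wt.
by move=> y; rewrite !wmass_wsup.
Qed.

Definition tup1 (a : D) : tup D 1 := [ffun _ => a].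

Lemma tup1_inj : injective tup1.
Proof. by move=> a b /ffunP /(_ ord0); rewrite !ffunE. Qed.

Lemma app_unary (f : op D 1) (x : 'I_1 -> tup D 1) :
  app f x = tup1 (f (tup1 (x ord0 ord0))).
Proof.
apply/ffunP => j; rewrite !ffunE; congr (f _); apply/ffunP => i.
by rewrite !ffunE (ord1 i) (ord1 j).
Qed.

Section FullCloneWeightings.
Variable Om : set (weighting D).
Hypothesis Om_full : forall w, Om w -> wcl w = full_clone.
Variable w0 : weighting D.
Hypothesis Om_w0 : Om w0.

Lemma gen_clone_full : gen_clone Om = full_clone.
Proof.
apply: functional_extensionality_dep => k; apply/setP => f.
rewrite inE; apply/asboolP/idP => [|f_full C _ C_sup].
  by apply; [exact: full_clone_is_clone | move=> w /Om_full-> j].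
by have /fintype.subsetP := C_sup w0 Om_w0 k; apply; rewrite Om_full.
Qed.

Lemma Pol_Imp_full k : Pol (Imp Om) k = full_clone k.
Proof.
apply/setP => f; rewrite !inE; apply/asboolP/idP => [[]//|k_gt0].
split=> // g [_ /(_ w0 Om_w0) [/(_ k) /fintype.subsetP w0_pol _]].
have := w0_pol f; rewrite Om_full // inE => /(_ k_gt0).
by rewrite inE => /asboolP[_]; apply.
Qed.

Lemma wClone_cone m (s t : tup D m) w :
  (forall w', Om w' -> cone_weighting s t (wfun w')) ->
  wClone Om w -> cone_weighting s t (wfun w).
Proof.
move=> Om_cone [_ wClone_min]; apply: wClone_min => //.
rewrite gen_clone_full; exact: cone_weighting_wclone.
Qed.

End FullCloneWeightings.
End WeightingCalculus.

Definition collapse : op 'I_3 1 := [ffun x : tup 'I_3 1 => if x ord0 == 0 then 0 else 1].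
Definition const0 : op 'I_3 1 := [ffun _ => 0].
Definition idop : op 'I_3 1 := proj 'I_3 ord0.

Definition omega (n : nat) : weighting 'I_3 :=
  Weighting (full_clone 'I_3) (ray (dirac_diff collapse idop) (dirac_diff const0 idop) n).

Definition omega_lim : weighting 'I_3 :=
  Weighting (full_clone 'I_3) (dirac_diff collapse idop).

Lemma dirac_diff_full_weighting (a : op 'I_3 1) :
  is_weighting (full_clone 'I_3) (dirac_diff a idop).
Proof. by apply: dirac_diff_weighting; [exact: full_clone_is_clone | rewrite inE]. Qed.

Lemma omega_in_W n : W_D (omega n).
Proof.
by split; [exact: full_clone_is_clone | apply: ray_weighting; apply: dirac_diff_full_weighting].
Qed.

Lemma wmass_dirac_diff_unary (a : op 'I_3 1) x (b : 'I_3) :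
  wmass (dirac_diff a idop) x (tup1 b) =
  (a (tup1 (x ord0 ord0)) == b)%:R - (x ord0 ord0 == b)%:R.
Proof.
rewrite wmass_dirac_diff !app_unary !(inj_eq (@tup1_inj _)).
by rewrite /idop /proj !ffunE.
Qed.

Lemma omega_cone n : cone_weighting (tup1 0) (tup1 1) (wfun (omega n)).
Proof.
split; first by apply: ray_weighting; apply: dirac_diff_full_weighting.
move=> x; rewrite !wmass_ray !wmass_dirac_diff_unary !ffunE.
case: (x ord0 ord0) => [[|[|[|//]]] ?] /=; rewrite !(subrr, subr0, mulr0, add0r).
  by right.
all: by left.
Qed.

Lemma omega_lim_not_cone : ~ cone_weighting (tup1 0) (tup1 1) (wfun omega_lim).
Proof.
move=> [_ /(_ (fun=> tup1 2%:R))]; rewrite !wmass_dirac_diff_unary !ffunE /=.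
by rewrite subrr /lex_cone ltxx => -[|[_]]; rewrite // subr0 ler10.
Qed.

Lemma omega_inj : injective omega.
Proof.
have collapse_at2 (f : op 'I_3 1) : f (tup1 2%:R) != 1 -> (collapse == f) = false.
  by move=> f2; apply: contraNF f2 => /eqP <-; rewrite !ffunE.
move=> m n [E]; have := Eqdep_dec.inj_pair2_eq_dec _ PeanoNat.Nat.eq_dec _ _ _ _ E.
move=> /ffunP /(_ collapse); rewrite !ffunE !eqxx !collapse_at2 ?ffunE //.
by rewrite subrr subr0 !addr0 !mulr1 => /eqP; rewrite eqr_nat => /eqP.
Qed.

Lemma range_omega0 : range omega (omega 0).
Proof. by exists 0%N. Qed.

Lemma omega_full w : range omega w -> wcl w = full_clone 'I_3.
Proof. by move=> [n _ <-]. Qed.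

Lemma omega_lim_wPol : wPol (Imp (range omega)) omega_lim.
Proof.
split; first by move=> k; rewrite (Pol_Imp_full omega_full range_omega0).
split; first exact: dirac_diff_full_weighting.
move=> g [_ g_imp]; apply: wpol_ray => n.
by apply: g_imp; exists n.
Qed.

Theorem lemma2 :
  exists (D : finType) (Om : set (weighting D)),
    Om `<=` @W_D D /\ infinite_set Om /\ wPol (Imp Om) <> wClone Om.
Proof.
exists 'I_3, (range omega); split; first by move=> w [n _ <-]; exact: omega_in_W.
split; first exact: infinite_range omega_inj.
move=> wPol_eq; apply: omega_lim_not_cone.
apply: (wClone_cone omega_full range_omega0); first by move=> w [n _ <-]; exact: omega_cone.
by rewrite -wPol_eq; exact: omega_lim_wPol.
Qed.
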